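(* For any distribution $P_{\bar Z\bar Y}$ on $\widehat{\mathcal S}\times\widehat{\mathcal X}$ and any positive integer $M$, there exists a deterministic $(M,d_s,d_x,\epsilon)$ code with \[\epsilon\le\int_0^1\mathbb E\Big[\big(\mathbb P[\pi(X,\bar Z,\bar Y)>t\mid X]\big)^M\Big]\,\mathrm dt,\] where $(X,\bar Z,\bar Y)\sim P_X\times P_{\bar Z\bar Y}$ and $\pi(x,z,y)=\mathbb P[\mathsf d_s(S,z)>d_s\text{ or }\mathsf d_x(x,y)>d_x\mid X=x]$ with $S\sim P_{S|X=x}$.
   Context: Let $\mathcal S,\mathcal X,\widehat{\mathcal S},\widehat{\mathcal X}$ be finite sets, $P_{SX}$ a distribution on $\mathcal S\times\mathcal X$, and $\mathsf d_s:\mathcal S\times\widehat{\mathcal S}\to[0,\infty)$, $\mathsf d_x:\mathcal X\times\widehat{\mathcal X}\to[0,\infty)$ distortion measures; fix $d_s,d_x\ge0$. An $(M,d_s,d_x,\epsilon)$ code is a random encoder $P_{U|X}:\mathcal X\to\{1,\dots,M\}$ and a random decoder $P_{ZY|U}:\{1,\dots,M\}\to\widehat{\mathcal S}\times\widehat{\mathcal X}$ (so $S-X-U-(Z,Y)$) such that $\mathbb P[\mathsf d_s(S,Z)>d_s\text{ or }\mathsf d_x(X,Y)>d_x]\le\epsilon$; it is deterministic if both mappings are deterministic functions. *)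

From HB Require Import structures.
From mathcomp Require Import all_boot all_order all_algebra.
From mathcomp Require Import all_classical all_reals all_analysis.
Set Implicit Arguments. Unset Strict Implicit. Unset Printing Implicit Defensive.
Import Order.TTheory GRing.Theory Num.Theory.
Local Open Scope ring_scope.

Definition is_pmf (R : realType) (T : finType) (P : T -> R) : Prop :=
  (forall t, 0 <= P t) /\ \sum_(t : T) P t = 1.

Definition marg_X (R : realType) (S X : finType) (P : S * X -> R) (x : X) : R :=
  \sum_(s : S) P (s, x).

(* pi(x,z,y) = P[ d_s(S,z) > ds or d_x(x,y) > dx | X = x ], S ~ P_{S|X=x}.
   (When P_X(x) = 0 the conditional is undefined; we use the value 0, which
   never matters since such x carry zero weight.) *)
Definition pi_fun (R : realType) (S X Sh Xh : finType) (P : S * X -> R)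
  (dS : S -> Sh -> R) (dX : X -> Xh -> R) (ds dx : R)
  (x : X) (z : Sh) (y : Xh) : R :=
  (\sum_(s : S) P (s, x) * (((ds < dS s z) || (dx < dX x y))%R)%:R) / marg_X P x.

Definition det_code_error (R : realType) (S X Sh Xh : finType) (M : nat)
  (P : S * X -> R) (dS : S -> Sh -> R) (dX : X -> Xh -> R) (ds dx : R)
  (f : X -> 'I_M) (g : 'I_M -> Sh * Xh) : R :=
  \sum_(p : S * X)
     P p * (((ds < dS p.1 (g (f p.2)).1) || (dx < dX p.2 (g (f p.2)).2))%R)%:R.

Definition rcu_integrand (R : realType) (S X Sh Xh : finType) (M : nat)
  (P : S * X -> R) (Q : Sh * Xh -> R) (dS : S -> Sh -> R) (dX : X -> Xh -> R)
  (ds dx : R) (t : R) : R :=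
  \sum_(x : X) marg_X P x *
     (\sum_(q : Sh * Xh) Q q * ((t < pi_fun P dS dX ds dx x q.1 q.2)%R)%:R) ^+ M.

(** Random coding: draw the codebook [c] i.i.d. from [Q] and encode [x] by
    the index minimising [pi x (c m)].  Given [X = x] the error probability is then
    [min_m pi x (c m)], whose mean over the codebook is, by the layer-cake
    formula, [int_0^1 P[min_m pi x (c m) > t] dt
             = int_0^1 P[pi x (Zb, Yb) > t]^M dt].
    Averaging over [x] gives the bound for the average code, so some
    deterministic codebook does at least as well. *)

From HB Require Import structures.
From mathcomp Require Import all_boot all_order all_algebra.
From mathcomp Require Import all_classical all_reals all_analysis.
From mathcomp Require Import measurable_realfun.
Import Order.TTheory GRing.Theory Num.Theory.
Local Open Scope ring_scope.
Local Open Scope classical_set_scope.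

Lemma exists_le_convex_comb {R : realDomainType} {I : finType} (w F : I -> R) :
  (forall i, 0 <= w i) -> \sum_i w i = 1 -> exists i, F i <= \sum_i w i * F i.
Proof.
move=> w_ge0 w_sum1.
have [i0 _ | I0] := pickP (@predT I); last first.
  by move: w_sum1; rewrite big_pred0 // => /esym/eqP; rewrite oner_eq0.
have [i _ Fi_min] := @arg_minP _ _ _ i0 predT F isT.
exists i; rewrite -[F i]mul1r -w_sum1 mulr_suml.
by apply: ler_sum => j _; rewrite ler_wpM2l ?Fi_min.
Qed.

Lemma lt_arg_min_prod {R : realDomainType} {I : finType} (i0 : I) (F : I -> R) (t : R) :
  (t < F [arg min_(i < i0) F i]%O)%R%:R = \prod_i (t < F i)%R%:R :> R.
Proof.
case: arg_minP => // i _ Fi_min.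
have [t_lt | t_ge] := boolP (t < F i).
  by rewrite [RHS]big1 // => j _; rewrite (lt_le_trans t_lt (Fi_min j isT)).
by rewrite (bigD1 i) //= (negbTE t_ge) mul0r.
Qed.

Section LayerCake.
Variable R : realType.
Local Notation mu := (@lebesgue_measure R).

Lemma lt_indicE (v t : R) : (t < v)%R%:R = (\1_[set` `]-oo, v[%R] t : R).
Proof. by rewrite indicE mem_setE in_itv. Qed.

Lemma measurable_lt_indic (D : set R) (v : R) :
  measurable_fun D (fun t : R => (t < v)%R%:R : R).
Proof.
rewrite (_ : (fun t => _) = \1_[set` `]-oo, v[%R]); last exact/funext/lt_indicE.
exact: measurable_indic.
Qed.

Lemma integral_itv01_lt (v : R) : 0 <= v <= 1 ->
  (\int[mu]_(t in `[0%R, 1%R]) ((t < v)%R%:R)%:E = v%:E)%E.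
Proof.
move=> /andP[v_ge0 v_le1].
under eq_integral do rewrite lt_indicE.
rewrite integral_indic //.
have -> : [set` `]-oo, v[%R] `&` `[0%R, 1%R] = [set` `[0, v[%R] :> set R.
  apply/seteqP; split => t /=; rewrite !in_itv /=.
    by move=> [t_lt /andP[t_ge0 _]]; rewrite t_ge0 t_lt.
  move=> /andP[t_ge0 t_lt]; split => //.
  by rewrite t_ge0 (le_trans (ltW t_lt) v_le1).
have := @lebesgue_measure_itv R `[0%R, v[%R; rewrite /= lte_fin => ->.
case: ltP => [_ | v_le0]; first by rewrite sube0.
by rewrite (@le_anti _ _ v 0) // v_le0 v_ge0.
Qed.

Lemma integral_itv01_sum_lt (I : finType) (a v : I -> R) :
  (forall i, 0 <= a i) -> (forall i, 0 <= v i <= 1) ->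
  (\int[mu]_(t in `[0%R, 1%R]) (\sum_i a i * (t < v i)%R%:R)%:E = (\sum_i a i * v i)%:E)%E.
Proof.
move=> a_ge0 v_01.
under eq_integral do rewrite -sumEFin.
rewrite ge0_integral_sum //; last 2 first.
- by move=> i; apply/measurable_EFinP/measurable_funM => //; exact: measurable_lt_indic.
- by move=> i t _; rewrite lee_fin mulr_ge0.
rewrite -sumEFin; apply: eq_bigr => i _.
under eq_integral do rewrite EFinM.
rewrite ge0_integralZl_EFin //; last by apply/measurable_EFinP; exact: measurable_lt_indic.
by rewrite integral_itv01_lt ?v_01.
Qed.

End LayerCake.

Section RandomCoding.
Context {R : realType} {S X Sh Xh : finType} (P : S * X -> R).
Context (dS : S -> Sh -> R) (dX : X -> Xh -> R) (ds dx : R).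
Hypothesis P_ge0 : forall p, 0 <= P p.

Local Notation PX := (marg_X P).
Local Notation pi := (pi_fun P dS dX ds dx).
Local Notation excess s x z y := ((ds < dS s z) || (dx < dX x y))%R.

Lemma marg_X_ge0 x : 0 <= PX x.
Proof. by apply: sumr_ge0 => s _. Qed.

Lemma excess_mass_le_marg_X x z y : \sum_s P (s, x) * (excess s x z y)%:R <= PX x.
Proof. by apply: ler_sum => s _; case: (_ || _); rewrite ?mulr1 ?mulr0. Qed.

Lemma pi_fun_itv01 x z y : 0 <= pi x z y <= 1.
Proof.
have [PX0 | PX_neq0] := eqVneq (PX x) 0.
  by rewrite /pi_fun -/(marg_X P x) PX0 invr0 mulr0 lexx ler01.
have PX_gt0 : 0 < PX x by rewrite lt_def PX_neq0 marg_X_ge0.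
rewrite divr_ge0 ?sumr_ge0 //=; last by move=> s _; rewrite mulr_ge0.
by rewrite ler_pdivrMr // mul1r excess_mass_le_marg_X.
Qed.

Lemma marg_X_mul_pi_fun x z y :
  PX x * pi x z y = \sum_s P (s, x) * (excess s x z y)%:R.
Proof.
rewrite /pi_fun -/(marg_X P x).
have [PX0 | PX_neq0] := eqVneq (PX x) 0; last by rewrite mulrC divfK.
rewrite PX0 mul0r; apply/esym/big1 => s _.
have /psumr_eq0P P_x0 := PX0.
by rewrite P_x0 ?mul0r // => s' _; exact: P_ge0.
Qed.

Lemma det_code_errorE (M : nat) (f : X -> 'I_M) (g : 'I_M -> Sh * Xh) :
  det_code_error P dS dX ds dx f g = \sum_x PX x * pi x (g (f x)).1 (g (f x)).2.
Proof.
transitivity (\sum_s \sum_x P (s, x) * (excess s x (g (f x)).1 (g (f x)).2)%:R).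
  by rewrite pair_bigA; apply: eq_bigr => -[s x].
by rewrite exchange_big; apply: eq_bigr => x _; rewrite marg_X_mul_pi_fun.
Qed.

Context {n : nat} (Q : Sh * Xh -> R).
Hypothesis Q_ge0 : forall q, 0 <= Q q.

Local Notation codebook := {ffun 'I_n.+1 -> Sh * Xh}.
Local Notation pi_at x c m := (pi x (c m).1 (c m).2).

Definition min_pi_encoder (c : codebook) (x : X) : 'I_n.+1 :=
  [arg min_(m < ord0) pi_at x c m]%O.

Definition codebook_weight (c : codebook) : R := \prod_m Q (c m).

Lemma codebook_weight_ge0 c : 0 <= codebook_weight c.
Proof. by apply: prodr_ge0 => m _. Qed.

Lemma sum_codebook_weight : \sum_q Q q = 1 -> \sum_c codebook_weight c = 1.
Proof.
by move=> Q_sum1; rewrite /codebook_weight -(bigA_distr_bigA (fun _ q => Q q)) /= Q_sum1 big1.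
Qed.

Lemma rcu_integrandE t : rcu_integrand n.+1 P Q dS dX ds dx t =
  \sum_(p : X * codebook) PX p.1 * codebook_weight p.2 *
    (t < pi_at p.1 p.2 (min_pi_encoder p.2 p.1))%R%:R.
Proof.
rewrite /rcu_integrand -(pair_bigA _ (fun x c =>
  PX x * codebook_weight c * (t < pi_at x c (min_pi_encoder c x))%R%:R)) /=.
apply: eq_bigr => x _.
rewrite -[in X in _ ^+ X](card_ord n.+1) -prodr_const bigA_distr_bigA mulr_sumr.
apply: eq_bigr => c _.
by rewrite big_split /= (lt_arg_min_prod ord0 (fun m => pi_at x c m)) mulrA.
Qed.

Lemma integral_rcu_integrand :
  (\int[@lebesgue_measure R]_(t in `[0%R, 1%R]) (rcu_integrand n.+1 P Q dS dX ds dx t)%:E =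
   (\sum_c codebook_weight c * det_code_error P dS dX ds dx (min_pi_encoder c) c)%:E)%E.
Proof.
under eq_integral do rewrite rcu_integrandE.
rewrite integral_itv01_sum_lt; last 2 first.
- by move=> p; rewrite mulr_ge0 ?marg_X_ge0 ?codebook_weight_ge0.
- by move=> p; exact: pi_fun_itv01.
congr _%:E; rewrite -(pair_bigA _ (fun x c =>
  PX x * codebook_weight c * pi_at x c (min_pi_encoder c x))) exchange_big /=.
apply: eq_bigr => c _.
rewrite det_code_errorE mulr_sumr; apply: eq_bigr => x _.
by rewrite [RHS]mulrA (mulrC (codebook_weight c)).
Qed.

End RandomCoding.

Theorem theorem1 (R : realType) (S X Sh Xh : finType)
  (P : S * X -> R) (dS : S -> Sh -> R) (dX : X -> Xh -> R) (ds dx : R)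
  (Q : Sh * Xh -> R) (M : nat) :
  is_pmf P -> (forall s z, 0 <= dS s z) -> (forall x y, 0 <= dX x y) ->
  0 <= ds -> 0 <= dx -> is_pmf Q -> (0 < M)%N ->
  exists (f : X -> 'I_M) (g : 'I_M -> Sh * Xh),
    ((det_code_error P dS dX ds dx f g)%:E <=
     \int[@lebesgue_measure R]_(t in `[0%R, 1%R]%classic)
        (rcu_integrand M P Q dS dX ds dx t)%:E)%E.
Proof.
move=> [P_ge0 _] _ _ _ _ [Q_ge0 Q_sum1]; case: M => // n _.
have [c c_good] := exists_le_convex_comb (codebook_weight (n := n) Q)
  (fun c => det_code_error P dS dX ds dx (min_pi_encoder P dS dX ds dx c) c)
  (codebook_weight_ge0 Q Q_ge0) (sum_codebook_weight Q Q_sum1).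
exists (min_pi_encoder P dS dX ds dx c), c.
by rewrite (integral_rcu_integrand P dS dX ds dx P_ge0 Q Q_ge0) lee_fin.
Qed.
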